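(* Let $E$ be a finite set, $\tau:2^E\to 2^E$, $A\subseteq E$ and $x\in A$. If $(E,\tau)$ is a violator space, then $x\in ex(A)$ if and only if $\tau(A)\neq\tau(A-\{x\})$. If $(E,\tau)$ is a convex space, then $x\in ex(A)$ implies $\tau(A)\neq\tau(A-\{x\})$.
   Context: $(E,\tau)$ is a violator space if (C1) $X\subseteq\tau(X)$ for all $X$, and (C22) $F\subseteq G\subseteq\tau(F)$ implies $\tau(G)=\tau(F)$. $(E,\tau)$ is a convex space if (C1) holds and (convexity) for all $X\subseteq Y\subseteq Z\subseteq E$ with $\tau(X)=\tau(Z)$ we have $\tau(Y)=\tau(X)$. An element $x\in A$ is an extreme point of $A$ if $x\notin\tau(A-\{x\})$; $ex(A)$ denotes the set of extreme points of $A$. *)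

From mathcomp Require Import all_boot.
Set Implicit Arguments. Unset Strict Implicit. Unset Printing Implicit Defensive.

Definition extensive (E : finType) (tau : {set E} -> {set E}) : Prop :=
  forall X : {set E}, X \subset tau X.

Definition C22 (E : finType) (tau : {set E} -> {set E}) : Prop :=
  forall F G : {set E}, F \subset G -> G \subset tau F -> tau G = tau F.

Definition violator_space (E : finType) (tau : {set E} -> {set E}) : Prop :=
  extensive tau /\ C22 tau.

Definition convexity (E : finType) (tau : {set E} -> {set E}) : Prop :=
  forall X Y Z : {set E}, X \subset Y -> Y \subset Z -> tau X = tau Z -> tau Y = tau X.

Definition convex_space (E : finType) (tau : {set E} -> {set E}) : Prop :=
  extensive tau /\ convexity tau.

Definition ex (E : finType) (tau : {set E} -> {set E}) (A : {set E}) : {set E} :=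
  [set x in A | x \notin tau (A :\ x)].

From mathcomp Require Import all_boot.

Section ExtremePoints.

Variables (E : finType) (tau : {set E} -> {set E}).

Lemma extensive_ex_tau_neq (A : {set E}) (x : E) :
  extensive tau -> x \in ex tau A -> tau A <> tau (A :\ x).
Proof.
move=> tau_ext; rewrite inE => /andP [xA x_notin] tauA_eq.
by move/negP: x_notin; apply; rewrite -tauA_eq (subsetP (tau_ext A)).
Qed.

(* A sits between A :\ x and tau (A :\ x), so (C22) applies. *)
Lemma C22_tau_setD1 (A : {set E}) (x : E) :
  extensive tau -> C22 tau -> x \in A -> x \in tau (A :\ x) ->
  tau A = tau (A :\ x).
Proof.
move=> tau_ext tau_C22 xA x_tau; apply: tau_C22; first exact: subsetDl.
apply/subsetP => y yA; have [->//|yx] := eqVneq y x.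
by apply: (subsetP (tau_ext _)); rewrite !inE yx.
Qed.

Lemma violator_exP (A : {set E}) (x : E) :
  violator_space tau -> x \in A ->
  (x \in ex tau A <-> tau A <> tau (A :\ x)).
Proof.
move=> [tau_ext tau_C22] xA; split; first exact: extensive_ex_tau_neq.
move=> tau_neq; rewrite inE xA /=; apply/negP => x_tau.
exact/tau_neq/C22_tau_setD1.
Qed.

End ExtremePoints.

Theorem mainTheorem11 (E : finType) (tau : {set E} -> {set E}) (A : {set E}) (x : E)
  (hx : x \in A) :
  (violator_space tau -> (x \in ex tau A <-> tau A <> tau (A :\ x))) /\
  (convex_space tau -> x \in ex tau A -> tau A <> tau (A :\ x)).
Proof.
split; first by move=> tau_viol; exact: violator_exP.
by move=> [tau_ext _]; exact: extensive_ex_tau_neq.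
Qed.
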